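(* Let $L_1,\dots,L_n$ be lines in $\mathbb{R}^3$ with $d(L_i,L_j)=1$ for all $1\le i<j\le n$, where $d(L,L')=\min_{x\in L,\,y\in L'}\|x-y\|$. If two of the lines $L_1,\dots,L_n$ are parallel, then $n\le 4$.
   Context: $\|\cdot\|$ is the Euclidean norm on $\mathbb{R}^3$. *)

From HB Require Import structures.
From mathcomp Require Import all_boot all_order all_algebra.
From mathcomp Require Import reals.
Set Implicit Arguments. Unset Strict Implicit. Unset Printing Implicit Defensive.
Import Order.TTheory GRing.Theory Num.Theory.
Local Open Scope ring_scope.

Definition enorm (R : realType) (x : 'rV[R]_3) : R :=
  Num.sqrt (\sum_(i < 3) x ord0 i ^+ 2).

Record line (R : realType) := Line {
  lpt : 'rV[R]_3;
  ldir : 'rV[R]_3;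
  ldir_neq0 : ldir != 0 }.

Definition on_line (R : realType) (L : line R) (x : 'rV[R]_3) : Prop :=
  exists t : R, x = lpt L + t *: ldir L.

Definition line_dist_is (R : realType) (L L' : line R) (r : R) : Prop :=
  (exists x y, on_line L x /\ on_line L' y /\ enorm (x - y) = r) /\
  (forall x y, on_line L x -> on_line L' y -> r <= enorm (x - y)).

Definition parallel (R : realType) (L L' : line R) : Prop :=
  exists c : R, ldir L' = c *: ldir L.

(* Let v be the common direction of two parallel lines L_i, L_j of the family and
   g = (p_i - p_j) x v the normal of the plane they span (|g| = |v| since they are
   at distance 1).  A line at distance 1 from both is either parallel to v, or
   orthogonal to g at height +-1 above that plane (unit_distance_transversal).
   Lines parallel to v at mutual distance 1 meet a plane orthogonal to v in points
   at mutual distance 1: there are at most three of them, and three of them are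
   never coplanar.  If three lines are parallel to v, a transversal would be
   orthogonal to two independent normals both orthogonal to v, hence parallel to v.
   If only two are, any two transversals have heights differing by at most their
   distance 1, so they lie in one plane and, being at distance 1, are parallel;
   three transversals would then be three coplanar parallel lines.  Hence at most
   four lines. *)

From HB Require Import structures.
From mathcomp Require Import all_boot all_order all_algebra.
From mathcomp Require Import reals.
From mathcomp Require Import ring lra zify.
Import Order.TTheory GRing.Theory Num.Theory.
Set Implicit Arguments. Unset Strict Implicit. Unset Printing Implicit Defensive.
Local Open Scope ring_scope.

Record vec3 (R : Type) := V3 { vx : R; vy : R; vz : R }.
Arguments V3 {R}.

Section Vec3Algebra.
Variable R : realType.
Implicit Types (x y z u v w d e g n p q : vec3 R) (a b c s t V : R).

Definition addv x y := V3 (vx x + vx y) (vy x + vy y) (vz x + vz y).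
Definition subv x y := V3 (vx x - vx y) (vy x - vy y) (vz x - vz y).
Definition scalev a x := V3 (a * vx x) (a * vy x) (a * vz x).
Definition dotv x y := vx x * vx y + vy x * vy y + vz x * vz y.
Definition crossv x y :=
  V3 (vy x * vz y - vz x * vy y) (vz x * vx y - vx x * vz y) (vx x * vy y - vy x * vx y).
Definition normsq x := dotv x x.
Definition det x y z := dotv x (crossv y z).
Definition colinear x y := normsq (crossv x y) == 0.

(* With w = p - q, [chord w d e s t] is the vector from q + t e to p + s d, so
   [at_unit_distance (p - q) d e] says that the lines p + R d and q + R e are at
   distance 1. *)
Definition chord w d e s t := addv w (subv (scalev s d) (scalev t e)).

Definition at_unit_distance w d e :=
  (forall s t, 1 <= normsq (chord w d e s t)) /\ exists s t, normsq (chord w d e s t) = 1.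

End Vec3Algebra.

Ltac vec3_ring :=
  repeat match goal with x : vec3 _ |- _ => destruct x end;
  rewrite /chord /colinear /det /normsq /dotv /crossv /scalev /subv /addv /=;
  first [ring | congr V3; ring].

Section Vec3Facts.
Variable R : realType.
Implicit Types (x y z u v w d e g n p q : vec3 R) (a b c s t V : R).

Lemma lagrange_identity x y : normsq x * normsq y = dotv x y ^+ 2 + normsq (crossv x y).
Proof. vec3_ring. Qed.

Lemma normsq_subv_scalev x v c :
  normsq (subv x (scalev c v)) * normsq v = (dotv x v - c * normsq v) ^+ 2 + normsq (crossv x v).
Proof. vec3_ring. Qed.

Lemma normsq_crossv_mul u w v : normsq (crossv u v) * normsq (crossv w v) =
  dotv (crossv u v) (crossv w v) ^+ 2 + dotv w (crossv u v) ^+ 2 * normsq v.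
Proof. vec3_ring. Qed.

Lemma normsq_crossv_crossv x y v :
  normsq (crossv (crossv x v) (crossv y v)) = det x y v ^+ 2 * normsq v.
Proof. vec3_ring. Qed.

Lemma normsq_scalev a x : normsq (scalev a x) = a ^+ 2 * normsq x.
Proof. vec3_ring. Qed.

Lemma normsq_subv x y : normsq (subv x y) = normsq x + normsq y - 2 * dotv x y.
Proof. vec3_ring. Qed.

Lemma dotvC x y : dotv x y = dotv y x.
Proof. vec3_ring. Qed.

Lemma dotv_scaler w a n : dotv w (scalev a n) = a * dotv w n.
Proof. vec3_ring. Qed.

Lemma dotv_crossvv x y : dotv y (crossv x y) = 0.
Proof. vec3_ring. Qed.

Lemma dotv_vcrossv x y : dotv x (crossv x y) = 0.
Proof. vec3_ring. Qed.

Lemma dotv_crossvC u w v : dotv u (crossv w v) = - dotv w (crossv u v).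
Proof. vec3_ring. Qed.

Lemma dotv_subv_split q p1 p2 n : dotv (subv q p2) n = dotv (subv q p1) n + dotv (subv p1 p2) n.
Proof. vec3_ring. Qed.

Lemma dotv_subvB x y z g : dotv (subv x y) g = dotv (subv x z) g - dotv (subv y z) g.
Proof. vec3_ring. Qed.

Lemma subv_crossv_shift p q r v :
  subv (crossv (subv p r) v) (crossv (subv q r) v) = crossv (subv p q) v.
Proof. vec3_ring. Qed.

Lemma normsq_ge0 x : 0 <= normsq x.
Proof. case: x => a b c; rewrite /normsq /dotv /=; nra. Qed.

Lemma normsq_gt0 x : normsq x != 0 -> 0 < normsq x.
Proof. by move=> h; rewrite lt0r h normsq_ge0. Qed.

Lemma normsq_eq0 x : normsq x = 0 -> x = V3 0 0 0.
Proof.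
case: x => a b c; rewrite /normsq /dotv /= => h.
have sq0 (r : R) : r * r = 0 -> r = 0 by move/eqP; rewrite mulf_eq0 orbb => /eqP.
by congr V3; apply: sq0; nra.
Qed.

Lemma scalev_neq0 a x : normsq (scalev a x) != 0 -> a != 0.
Proof. by rewrite normsq_scalev; apply: contraNneq => ->; rewrite expr0n mul0r. Qed.

Lemma colinearxx x : colinear x x.
Proof. apply/eqP; vec3_ring. Qed.

Lemma colinear_scalel a x : colinear (scalev a x) x.
Proof. apply/eqP; vec3_ring. Qed.

Lemma colinearP v x : normsq v != 0 -> colinear x v ->
  x = scalev (dotv x v / normsq v) v.
Proof.
move=> v_neq0 /eqP xv; set c := dotv x v / normsq v.
have : normsq (subv x (scalev c v)) * normsq v = 0.
  by rewrite normsq_subv_scalev xv addr0 /c divfK // subrr expr0n.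
move/eqP; rewrite mulf_eq0 (negbTE v_neq0) orbF => /eqP/normsq_eq0; move: c => c.
case: x xv => ???; case: v v_neq0 => ??? _ _ /= [] *.
by rewrite /scalev /=; congr V3; lra.
Qed.

Lemma colinear_trans y x z : normsq y != 0 -> colinear x y -> colinear z y -> colinear x z.
Proof.
move=> y_neq0 /(colinearP y_neq0) -> /(colinearP y_neq0) ->.
apply/eqP; vec3_ring.
Qed.

Lemma orthogonal2_colinear x g h : dotv x g = 0 -> dotv x h = 0 -> colinear x (crossv g h).
Proof.
move=> xg xh; rewrite /colinear.
have -> : crossv x (crossv g h) = subv (scalev (dotv x h) g) (scalev (dotv x g) h) by vec3_ring.
by rewrite xg xh; apply/eqP; vec3_ring.
Qed.

Lemma det_orthogonal g x y z : normsq g != 0 ->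
  dotv x g = 0 -> dotv y g = 0 -> dotv z g = 0 -> det x y z = 0.
Proof.
move=> g_neq0 xg yg zg.
have : det x y z * normsq g = dotv x g * det g y z + dotv y g * det g z x + dotv z g * det g x y.
  by vec3_ring.
by rewrite xg yg zg !mul0r !addr0 => /eqP; rewrite mulf_eq0 (negbTE g_neq0) orbF => /eqP.
Qed.

Lemma equilateral_not_colinear V x y : 0 < V ->
  normsq x = V -> normsq y = V -> normsq (subv x y) = V -> ~~ colinear x y.
Proof.
move=> V_gt0 xV yV; rewrite normsq_subv xV yV /colinear => xyV.
have := lagrange_identity x y; rewrite xV yV.
have -> : dotv x y = V / 2 by lra.
by move=> h; apply/eqP => c0; rewrite c0 in h; nra.
Qed.

Lemma regular_simplex_not_coplanar V x y z : 0 < V ->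
  normsq x = V -> normsq y = V -> normsq z = V ->
  normsq (subv x y) = V -> normsq (subv x z) = V -> normsq (subv y z) = V -> det x y z != 0.
Proof.
move=> V_gt0 xV yV zV; rewrite !normsq_subv xV yV zV => xy xz yz.
have gram : det x y z ^+ 2 = normsq x * normsq y * normsq z
    + 2 * dotv x y * dotv y z * dotv x z - normsq x * dotv y z ^+ 2
    - normsq y * dotv x z ^+ 2 - normsq z * dotv x y ^+ 2 by vec3_ring.
have [dxy dyz dxz] : [/\ dotv x y = V / 2, dotv y z = V / 2 & dotv x z = V / 2] by split; lra.
rewrite xV yV zV dxy dyz dxz in gram; apply/eqP => d0; rewrite d0 expr0n /= in gram.
have : 0 < V ^+ 3 by rewrite exprn_gt0.
nra.
Qed.

Lemma sqr_roots_close_eq N a b : 0 < N ->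
  a ^+ 2 = N -> b ^+ 2 = N -> (a - b) ^+ 2 <= N -> a = b.
Proof.
move=> N_gt0 aN bN abN.
have : (a - b) * (a + b) = 0 by rewrite -(subrr N) -{1}aN -bN; ring.
move/eqP; rewrite mulf_eq0 => /orP[/eqP|/eqP ab0]; first lra.
have ba : b = - a by lra.
by move: abN; rewrite ba; nra.
Qed.

Lemma unit_distance_orthogonal_le w d e g : at_unit_distance w d e ->
  dotv d g = 0 -> dotv e g = 0 -> dotv w g ^+ 2 <= normsq g.
Proof.
move=> [_ [s [t chord1]]] dg eg.
have := lagrange_identity (chord w d e s t) g.
have -> : dotv (chord w d e s t) g = dotv w g + s * dotv d g - t * dotv e g by vec3_ring.
by rewrite chord1 mul1r dg eg !mulr0 subr0 addr0 => ->; rewrite lerDl normsq_ge0.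
Qed.

(* The feet of the common perpendicular: w = a d + b e + (w.n / |n|^2) n, with the
   coefficients read off the dual basis e x n, n x d, n of d, e, n. *)
Lemma normsq_chord_skew_foot w d e : ~~ colinear d e ->
  let n := crossv d e in
  normsq (chord w d e (- det w e n / normsq n) (det w n d / normsq n)) = dotv w n ^+ 2 / normsq n.
Proof.
rewrite /colinear; case: w => ???; case: d => ???; case: e => ???.
rewrite /chord /det /normsq /dotv /crossv /scalev /subv /addv /= => de.
by field.
Qed.

Lemma unit_distance_skew w d e : ~~ colinear d e -> at_unit_distance w d e ->
  dotv w (crossv d e) ^+ 2 = normsq (crossv d e).
Proof.
move=> de dist1; have n_gt0 := normsq_gt0 de.
apply/eqP; rewrite eq_le (unit_distance_orthogonal_le dist1) ?dotv_vcrossv ?dotv_crossvv //=.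
move: (normsq_chord_skew_foot w de) => /= foot.
by rewrite -[X in X <= _]mul1r -ler_pdivlMr // -foot; apply: dist1.1.
Qed.

Lemma unit_distance_parallel w d e v : normsq v != 0 -> normsq d != 0 ->
  colinear d v -> colinear e v -> at_unit_distance w d e -> normsq (crossv w v) = normsq v.
Proof.
move=> v_neq0 d_neq0 /(colinearP v_neq0) dE /(colinearP v_neq0) eE [far [s0 [t0 near]]].
move: (dotv d v / _) (dotv e v / _) dE eE => a b dE eE; subst d e.
have a_neq0 := scalev_neq0 d_neq0.
have v_gt0 := normsq_gt0 v_neq0.
have key s t : normsq (chord w (scalev a v) (scalev b v) s t) * normsq v
    = (dotv w v - (t * b - s * a) * normsq v) ^+ 2 + normsq (crossv w v).
  rewrite -normsq_subv_scalev; congr (normsq _ * _); vec3_ring.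
have up : normsq (crossv w v) <= normsq v.
  by rewrite -[normsq v]mul1r -near key lerDr sqr_ge0.
have lo : normsq v <= normsq (crossv w v).
  have := far (- (dotv w v / normsq v) / a) 0; rewrite -(ler_pM2r v_gt0) mul1r key.
  have -> : dotv w v - (0 * b - - (dotv w v / normsq v) / a * a) * normsq v = 0.
    by field; rewrite a_neq0.
  by rewrite expr0n add0r.
by apply/eqP; rewrite eq_le up lo.
Qed.

Lemma unit_distance_skew_colinear w u d v : normsq v != 0 -> normsq d != 0 ->
  colinear d v -> ~~ colinear u v -> at_unit_distance w u d ->
  dotv w (crossv u v) ^+ 2 = normsq (crossv u v).
Proof.
move=> v_neq0 d_neq0 /(colinearP v_neq0) dE uv.
move: (dotv d v / _) dE => a dE; subst d.
have a2 : a ^+ 2 != 0 by rewrite expf_neq0 // (scalev_neq0 d_neq0).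
have cross_scale : crossv u (scalev a v) = scalev a (crossv u v) by vec3_ring.
have ud : ~~ colinear u (scalev a v).
  by rewrite /colinear cross_scale normsq_scalev mulf_eq0 negb_or a2.
move/(unit_distance_skew ud); rewrite cross_scale dotv_scaler normsq_scalev exprMn.
exact: mulfI.
Qed.

Lemma unit_distance_transversal p1 p2 q u v d1 d2 :
  normsq v != 0 -> normsq d1 != 0 -> normsq d2 != 0 -> colinear d1 v -> colinear d2 v ->
  normsq (crossv (subv p1 p2) v) = normsq v -> ~~ colinear u v ->
  at_unit_distance (subv q p1) u d1 -> at_unit_distance (subv q p2) u d2 ->
  dotv u (crossv (subv p1 p2) v) = 0 /\
  dotv (subv q p1) (crossv (subv p1 p2) v) ^+ 2 = normsq (crossv (subv p1 p2) v).
Proof.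
(* With n = u x v, the heights (q - p1).n and (q - p2).n both square to |n|^2 and
   differ by W = (p1 - p2).n, where W^2 <= |n|^2; hence W = 0, so g is orthogonal to
   u and v, i.e. a multiple of n. *)
move=> v_neq0 d1_neq0 d2_neq0 d1v d2v gap uv dist1 dist2.
have v_gt0 := normsq_gt0 v_neq0; have n_gt0 := normsq_gt0 uv.
have X2 := unit_distance_skew_colinear v_neq0 d1_neq0 d1v uv dist1.
have := unit_distance_skew_colinear v_neq0 d2_neq0 d2v uv dist2.
rewrite (dotv_subv_split q p1).
have gram := normsq_crossv_mul u (subv p1 p2) v; rewrite gap in gram.
move: X2 gram; set n := crossv u v; set g := crossv _ v.
set X := dotv _ n; set W := dotv _ n => X2 gram XW2.
have W2_le : W ^+ 2 <= normsq n.
  by rewrite -(ler_pM2r v_gt0) gram lerDr sqr_ge0.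
have W0 : W = 0.
  have -> : W = X + W - X by ring.
  by rewrite (sqr_roots_close_eq n_gt0 XW2 X2) ?subrr // addrC addKr.
have ug : dotv u g = 0 by rewrite dotv_crossvC -/n -/W W0 oppr0.
split=> //.
have /(colinearP uv) -> : colinear g n.
  by apply: orthogonal2_colinear; rewrite dotvC ?ug ?dotv_crossvv.
by rewrite dotv_scaler normsq_scalev exprMn X2.
Qed.

End Vec3Facts.

Section Configuration.
Variables (R : realType) (I : finType) (P D : I -> vec3 R).
Hypothesis D_neq0 : forall k, normsq (D k) != 0.
Hypothesis unit_dist : forall k l, k != l -> at_unit_distance (subv (P k) (P l)) (D k) (D l).

Lemma parallel_gap v k l : normsq v != 0 -> k != l -> colinear (D k) v -> colinear (D l) v ->
  normsq (crossv (subv (P k) (P l)) v) = normsq v.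
Proof. by move=> v_neq0 kl kv lv; apply: unit_distance_parallel kv lv (unit_dist kl). Qed.

Lemma no_four_parallel v a b c e : normsq v != 0 ->
  b != a -> c != a -> e != a -> b != c -> b != e -> c != e ->
  colinear (D a) v -> colinear (D b) v -> colinear (D c) v -> colinear (D e) v -> False.
Proof.
move=> v_neq0 ba ca ea bc be ce av bv cv ev.
have gap k l : k != l -> colinear (D k) v -> colinear (D l) v ->
    normsq (crossv (subv (P k) (P l)) v) = normsq v by exact: parallel_gap.
have perp k : dotv (crossv (subv (P k) (P a)) v) v = 0 by rewrite dotvC dotv_crossvv.
have := regular_simplex_not_coplanar (normsq_gt0 v_neq0)
  (gap b a ba bv av) (gap c a ca cv av) (gap e a ea ev av).
rewrite !subv_crossv_shift (gap b c) // (gap b e) // (gap c e) //.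
by rewrite (det_orthogonal v_neq0 (perp b) (perp c) (perp e)) eqxx => /(_ erefl erefl erefl).
Qed.

Lemma no_three_coplanar_parallel v a b c : normsq v != 0 -> b != a -> c != a -> b != c ->
  colinear (D a) v -> colinear (D b) v -> colinear (D c) v ->
  det (subv (P b) (P a)) (subv (P c) (P a)) v = 0 -> False.
Proof.
move=> v_neq0 ba ca bc av bv cv coplanar.
have := equilateral_not_colinear (normsq_gt0 v_neq0)
  (parallel_gap v_neq0 ba bv av) (parallel_gap v_neq0 ca cv av).
rewrite subv_crossv_shift (parallel_gap v_neq0 bc bv cv) /colinear normsq_crossv_crossv.
by rewrite coplanar expr0n mul0r eqxx => /(_ erefl).
Qed.

Lemma transversal_to_parallel_pair v i j k : normsq v != 0 -> i != j ->
  colinear (D i) v -> colinear (D j) v -> ~~ colinear (D k) v ->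
  let g := crossv (subv (P i) (P j)) v in
  dotv (D k) g = 0 /\ dotv (subv (P k) (P i)) g ^+ 2 = normsq g.
Proof.
move=> v_neq0 ij iv jv kv.
have ki : k != i by apply: contraNneq kv => ->.
have kj : k != j by apply: contraNneq kv => ->.
exact: unit_distance_transversal (parallel_gap v_neq0 ij iv jv) kv (unit_dist ki) (unit_dist kj).
Qed.

Lemma coplanar_pair_parallel g k l : normsq g != 0 -> k != l ->
  dotv (D k) g = 0 -> dotv (D l) g = 0 -> dotv (subv (P k) (P l)) g = 0 -> colinear (D k) (D l).
Proof.
move=> g_neq0 kl kg lg klg; apply/negPn/negP => skew.
have := unit_distance_skew skew (unit_dist kl).
by rewrite -/(det _ _ _) (det_orthogonal g_neq0 klg kg lg) expr0n => /esym/eqP; apply/negP.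
Qed.

Lemma three_parallel_no_transversal v a b c k : normsq v != 0 -> b != a -> c != a -> b != c ->
  colinear (D a) v -> colinear (D b) v -> colinear (D c) v -> ~~ colinear (D k) v -> False.
Proof.
move=> v_neq0 ba ca bc av bv cv kv.
have [kg _] := transversal_to_parallel_pair v_neq0 ba bv av kv.
have [kh _] := transversal_to_parallel_pair v_neq0 ca cv av kv.
move: kg kh; set g := crossv _ v; set h := crossv _ v => kg kh.
have g_neq0 : normsq g != 0 by rewrite parallel_gap.
have h_neq0 : normsq h != 0 by rewrite parallel_gap.
have vg : dotv v g = 0 by exact: dotv_crossvv.
have vh : dotv v h = 0 by exact: dotv_crossvv.
have [gh|gh] := boolP (colinear g h).
  apply: (no_three_coplanar_parallel v_neq0 ba ca bc av bv cv).
  apply: (det_orthogonal g_neq0 (dotv_vcrossv _ _) _ vg).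
  by rewrite (colinearP h_neq0 gh) dotv_scaler dotv_vcrossv mulr0.
move/negP: kv; apply.
by apply: (@colinear_trans _ (crossv g h)) => //; exact: orthogonal2_colinear.
Qed.

Lemma parallel_pair_no_three_transversals v a b k l m : normsq v != 0 -> a != b ->
  colinear (D a) v -> colinear (D b) v -> k != l -> l != m -> m != k ->
  ~~ colinear (D k) v -> ~~ colinear (D l) v -> ~~ colinear (D m) v -> False.
Proof.
move=> v_neq0 ab av bv kl lm mk kv lv mv.
have := transversal_to_parallel_pair v_neq0 ab av bv; set g := crossv _ v => side.
have g_gt0 : 0 < normsq g by rewrite /g (parallel_gap v_neq0 ab av bv) normsq_gt0.
have g_neq0 := lt0r_neq0 g_gt0.
have flat x y : x != y -> ~~ colinear (D x) v -> ~~ colinear (D y) v ->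
    dotv (subv (P x) (P y)) g = 0.
  move=> xy xv yv; have [xg xa] := side x xv; have [yg ya] := side y yv.
  have := unit_distance_orthogonal_le (unit_dist xy) xg yg.
  rewrite (dotv_subvB _ _ (P a)) => /(sqr_roots_close_eq g_gt0 xa ya) ->.
  exact: subrr.
have par x : x != k -> ~~ colinear (D x) v -> colinear (D x) (D k).
  move=> xk xv; apply: (coplanar_pair_parallel g_neq0 xk (side x xv).1 (side k kv).1).
  exact: flat.
have lk : l != k by rewrite eq_sym.
apply: (no_three_coplanar_parallel (D_neq0 k) lk mk lm (colinearxx _) (par l lk lv) (par m mk mv)).
exact: det_orthogonal g_neq0 (flat l k lk lv kv) (flat m k mk mv kv) (side k kv).1.
Qed.

Lemma card_parallel_le3 v : normsq v != 0 -> (#|[set k | colinear (D k) v]| <= 3)%N.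
Proof.
move=> v_neq0; rewrite leqNgt; apply/negP => S_gt3.
have /card_gt0P [a aS] : (0 < #|[set k | colinear (D k) v]|)%N by lia.
have /card_gt2P [b [c [e [[bS cS eS] [bc ce eb]]]]] : (2 < #|[set k | colinear (D k) v] :\ a|)%N.
  by move: S_gt3; rewrite (cardsD1 a) aS.
move: aS bS cS eS; rewrite !inE => av /andP[ba bv] /andP[ca cv] /andP[ea ev].
by apply: (no_four_parallel v_neq0 ba ca ea bc _ ce av bv cv ev); rewrite eq_sym.
Qed.

Lemma parallel_triple_all_parallel v k : normsq v != 0 ->
  (2 < #|[set k | colinear (D k) v]|)%N -> colinear (D k) v.
Proof.
move=> v_neq0 /card_gt2P [a [b [c [[aS bS cS] [ab bc ca]]]]].
move: aS bS cS; rewrite !inE => av bv cv; apply/negPn/negP => kv.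
by apply: (three_parallel_no_transversal v_neq0 _ ca bc av bv cv kv); rewrite eq_sym.
Qed.

Lemma card_transversals_le2 v : normsq v != 0 ->
  (1 < #|[set k | colinear (D k) v]|)%N -> (#|~: [set k | colinear (D k) v]| <= 2)%N.
Proof.
move=> v_neq0 /card_gt1P [a [b [aS bS ab]]]; rewrite leqNgt; apply/negP.
move=> /card_gt2P [k [l [m [[kT lT mT] [kl lm mk]]]]].
move: aS bS kT lT mT; rewrite !inE => av bv kv lv mv.
exact: (parallel_pair_no_three_transversals v_neq0 ab av bv kl lm mk kv lv mv).
Qed.

Lemma card_le4_of_parallel_pair i j : i != j -> colinear (D j) (D i) -> (#|I| <= 4)%N.
Proof.
move=> ij ji; have v_neq0 := D_neq0 i.
have S_gt1 : (1 < #|[set k | colinear (D k) (D i)]|)%N.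
  by apply/card_gt1P; exists i, j; rewrite !inE colinearxx ji.
rewrite -(cardsC [set k | colinear (D k) (D i)]).
have [S_le2|S_gt2] := leqP #|[set k | colinear (D k) (D i)]| 2.
  by have := card_transversals_le2 v_neq0 S_gt1; lia.
have -> : ~: [set k | colinear (D k) (D i)] = set0.
  by apply/setP => k; rewrite !inE parallel_triple_all_parallel.
by rewrite cards0 addn0 (leq_trans (card_parallel_le3 v_neq0)).
Qed.

End Configuration.

Section RowVectors.
Variable R : realType.

Definition vec3_of_row (x : 'rV[R]_3) : vec3 R :=
  V3 (x ord0 (inord 0)) (x ord0 (inord 1)) (x ord0 (inord 2)).

Lemma enorm_vec3 (x : 'rV[R]_3) : enorm x = Num.sqrt (normsq (vec3_of_row x)).
Proof.
rewrite /enorm /normsq /dotv !big_ord_recr big_ord0 /= add0r !expr2.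
by congr (Num.sqrt (_ + _ + _)); congr (x _ _ * x _ _); apply: val_inj; rewrite /= inordK.
Qed.

Lemma vec3_of_row_chord (p q d e : 'rV[R]_3) s t :
  vec3_of_row (p + s *: d - (q + t *: e)) =
  chord (subv (vec3_of_row p) (vec3_of_row q)) (vec3_of_row d) (vec3_of_row e) s t.
Proof. by rewrite /vec3_of_row /chord /addv /subv /scalev /=; congr V3; rewrite !mxE; ring. Qed.

Lemma line_dist_is1_unit_distance (L L' : line R) : line_dist_is L L' 1 ->
  at_unit_distance (subv (vec3_of_row (lpt L)) (vec3_of_row (lpt L')))
    (vec3_of_row (ldir L)) (vec3_of_row (ldir L')).
Proof.
move=> [[x [y [[s ->] [[t ->] xy1]]]] far]; split=> [s' t'|].
  have := far _ _ (ex_intro _ s' erefl) (ex_intro _ t' erefl).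
  by rewrite enorm_vec3 vec3_of_row_chord -{1}sqrtr1 ler_sqrt // normsq_ge0.
exists s, t; move: xy1; rewrite enorm_vec3 vec3_of_row_chord -sqrtr1 => /eqP.
by rewrite eqr_sqrt ?normsq_ge0 ?ler01 // sqrtr1 => /eqP.
Qed.

Lemma normsq_ldir_neq0 (L : line R) : normsq (vec3_of_row (ldir L)) != 0.
Proof.
apply: contra (ldir_neq0 L) => /eqP/normsq_eq0 [x0 y0 z0].
apply/eqP/matrixP => i k; rewrite (ord1 i) mxE.
have -> : k = inord k by apply: val_inj; rewrite /= inordK.
by case: k => [[|[|[|k]]]] //= _; rewrite ?x0 ?y0 ?z0.
Qed.

Lemma parallel_colinear (L L' : line R) :
  parallel L L' -> colinear (vec3_of_row (ldir L')) (vec3_of_row (ldir L)).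
Proof.
move=> [c ->]; have -> : vec3_of_row (c *: ldir L) = scalev c (vec3_of_row (ldir L)).
  by rewrite /vec3_of_row /scalev /=; congr V3; rewrite mxE.
exact: colinear_scalel.
Qed.

End RowVectors.

Theorem mainTheorem4 (R : realType) (n : nat) (L : 'I_n -> line R)
  (hdist : forall i j : 'I_n, i != j -> line_dist_is (L i) (L j) 1)
  (hpar : exists i j : 'I_n, i != j /\ parallel (L i) (L j)) :
  (n <= 4)%N.
Proof.
have [i [j [ij ij_par]]] := hpar.
rewrite -[n]card_ord.
apply: (@card_le4_of_parallel_pair _ _ (fun k => vec3_of_row (lpt (L k)))
  (fun k => vec3_of_row (ldir (L k))) _ _ i j ij (parallel_colinear ij_par)).
- by move=> k; exact: normsq_ldir_neq0.
- by move=> k l kl; exact: line_dist_is1_unit_distance (hdist k l kl).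
Qed.
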